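(* Let $A_1,\ldots,A_n$ be events in a probability space, let $X$ be the number of these events that occur, and for $1\le j\le n$ let $S_j=\sum_{1\le i_1<\cdots<i_j\le n}P(A_{i_1}\cdots A_{i_j})$. Let $r,k$ be integers with $1\le r\le k<n$. If $r+k$ is odd, then $$P(X\ge r)\ge\sum_{j=r}^{k}(-1)^{r+j}\binom{j-1}{r-1}S_j+\sum_{i=1}^{r}\binom{k-i}{r-i}\frac{\binom{k+1}{i}}{\binom{n}{i}}S_{k+1},$$ and if $r+k$ is even, then $$P(X\ge r)\le\sum_{j=r}^{k}(-1)^{r+j}\binom{j-1}{r-1}S_j-\sum_{i=1}^{r}\binom{k-i}{r-i}\frac{\binom{k+1}{i}}{\binom{n}{i}}S_{k+1}.$$
   Context: Binomial convention: for integers $s,t$, $\binom{t}{s}=0$ if $\min(s,t)<0$ or $s>t$; otherwise $\binom{t}{s}=\frac{t!}{s!(t-s)!}$. $A_{i_1}\cdots A_{i_j}$ denotes the intersection of the events. *)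

From HB Require Import structures.
From mathcomp Require Import all_boot all_order all_algebra.
From mathcomp Require Import all_classical all_reals all_analysis.
Set Implicit Arguments. Unset Strict Implicit. Unset Printing Implicit Defensive.
Import Order.TTheory GRing.Theory Num.Theory.
Local Open Scope classical_set_scope.
Local Open Scope ring_scope.

Definition inter_ev {T : Type} {n : nat} (A : 'I_n -> set T) (I : {set 'I_n}) : set T :=
  [set x | forall i : 'I_n, i \in I -> A i x].

Definition num_occ {T : Type} {n : nat} (A : 'I_n -> set T) (x : T) : nat :=
  #|[set i : 'I_n | `[< A i x >]]|.

Definition Sj {d : measure_display} {T : measurableType d} {R : realType}
  (P : probability T R) {n : nat} (A : 'I_n -> set T) (j : nat) : R :=
  \sum_(I : {set 'I_n} | #|I| == j) fine (P (inter_ev A I)).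

Definition bonf_main {d : measure_display} {T : measurableType d} {R : realType}
  (P : probability T R) {n : nat} (A : 'I_n -> set T) (r k : nat) : R :=
  \sum_(r <= j < k.+1) (-1) ^+ (r + j) * ('C(j.-1, r.-1))%:R * Sj P A j.

Definition bonf_corr {d : measure_display} {T : measurableType d} {R : realType}
  (P : probability T R) {n : nat} (A : 'I_n -> set T) (r k : nat) : R :=
  \sum_(1 <= i < r.+1)
     ('C(k - i, r - i))%:R * (('C(k.+1, i))%:R / ('C(n, i))%:R) * Sj P A k.+1.

From HB Require Import structures.
From mathcomp Require Import all_boot all_order all_algebra.
From mathcomp Require Import all_classical all_reals all_analysis.
From mathcomp Require Import zify ring.
Import Order.TTheory GRing.Theory Num.Theory.
Set Implicit Arguments. Unset Strict Implicit. Unset Printing Implicit Defensive.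

(* Both P(X >= r) and S_j = E[C(X, j)] are expectations of functions of X, so
   it suffices to prove the inequality pointwise, for each value m <= n of X.
   For fixed m the truncated alternating sum differs from 1{m >= r} by
   (-1)^(r+k+1) G(r,k,m), where G(r,k,m) = sum_(i=1..r) C(k-i,r-i) C(m-i,k+1-i)
   is a nonnegative integer; this follows by induction on k from
   G(r,k+1,m) + G(r,k,m) = C(k,r-1) C(m,k+1).  The correction term is bounded
   by G term by term, since C(m,k+1) C(k+1,i) = C(m,i) C(m-i,k+1-i) and
   C(m,i) <= C(n,i). *)

Lemma bin_trinomial (m a b : nat) : b <= a ->
  'C(m, a) * 'C(a, b) = 'C(m, b) * 'C(m - b, a - b).
Proof.
move=> ba; have [am | ma] := leqP a m; last first.
  rewrite bin_small // mul0n; have [bm | mb] := leqP b m; last by rewrite bin_small.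
  by rewrite [X in _ * X]bin_small ?muln0 //; lia.
have fact_pos : 0 < b`! * (a - b)`! * (m - a)`! by rewrite !muln_gt0 !fact_gt0.
apply/eqP; rewrite -(eqn_pmul2r fact_pos); apply/eqP.
have mb_ab : m - b - (a - b) = m - a by lia.
have := bin_fact ba; have := bin_fact am; have := bin_fact (leq_trans ba am).
have := bin_fact (leq_sub2r b am); rewrite mb_ab => e1 e2 e3 e4.
transitivity m`!; first by rewrite -e3 -e4; ring.
by rewrite -e2 -e1; ring.
Qed.

Definition bonf_rem (r k m : nat) : nat :=
  \sum_(1 <= i < r.+1) 'C(k - i, r - i) * 'C(m - i, k.+1 - i).

Lemma bonf_rem0 k m : bonf_rem 0 k m = 0.
Proof. by rewrite /bonf_rem big_geq. Qed.

Lemma bonf_remS r k m :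
  bonf_rem r.+1 k.+1 m = 'C(k, r) * 'C(m.-1, k.+1) + bonf_rem r k m.-1.
Proof.
rewrite /bonf_rem big_ltn // big_add1 /= !subSS !subn0 subn1.
by congr (_ + _); apply: eq_bigr => i _; rewrite !subSS; congr (_ * 'C(_, _)); lia.
Qed.

Lemma bonf_rem_diag r m : 0 < r -> 'C(m, r) = (r <= m) + bonf_rem r r m.
Proof.
case: r => // r _; elim: r m => [|r IH] m; rewrite bonf_remS binn mul1n.
  by rewrite bonf_rem0 !bin1 addn0; case: m.
have := IH m.-1; case: m => [|m] /=; first by rewrite !bin0n => <-.
by rewrite binS => ->; lia.
Qed.

Lemma bonf_remSk r k m : 0 < r -> r <= k ->
  bonf_rem r k.+1 m + bonf_rem r k m = 'C(k, r.-1) * 'C(m, k.+1).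
Proof.
case: r => // r _; elim: r k m => [|r IH] [|k] m // rk;
  rewrite (bonf_remS _ k.+1 m) (bonf_remS _ k m).
  by rewrite !bonf_rem0 !bin0 !mul1n !addn0; case: m => // m; rewrite binS.
rewrite addnACA IH // -addnA -mulnDl -binS -mulnDr.
by case: m => [|m]; rewrite ?bin0n // -binS.
Qed.

Local Open Scope ring_scope.

Definition bonf_poly (R : pzRingType) (r k m : nat) : R :=
  \sum_(r <= j < k.+1) (-1) ^+ (r + j) * ('C(j.-1, r.-1))%:R * ('C(m, j))%:R.

Lemma bonf_poly_rem (R : comPzRingType) (r k m : nat) : (0 < r)%N -> (r <= k)%N ->
  (r <= m)%:R - bonf_poly R r k m = (-1) ^+ (r + k).+1 * (bonf_rem r k m)%:R.
Proof.
move=> r_gt0; elim: k => [|k IH]; first by rewrite leqn0 => /eqP r0; rewrite r0 in r_gt0.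
rewrite leq_eqVlt ltnS => /orP[/eqP <- | rk].
  rewrite /bonf_poly big_nat1 binn (bonf_rem_diag m r_gt0) natrD.
  by rewrite exprS -signr_odd addnn odd_double; ring.
have rem_rec := congr1 (fun x => x%:R : R) (bonf_remSk m r_gt0 rk).
rewrite /= natrD natrM in rem_rec.
rewrite /bonf_poly big_nat_recr /= -/(bonf_poly R r k m); last exact: ltnW.
rewrite opprD addrA IH //.
have -> : (bonf_rem r k.+1 m)%:R = ('C(k, r.-1))%:R * ('C(m, k.+1))%:R
                                    - (bonf_rem r k m)%:R :> R.
  by rewrite -rem_rec addrK.
by rewrite !addnS !exprS; ring.
Qed.

Definition bonf_coef (R : fieldType) (n r k : nat) : R :=
  \sum_(1 <= i < r.+1) ('C(k - i, r - i))%:R * (('C(k.+1, i))%:R / ('C(n, i))%:R).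

Lemma bonf_coef_le (R : numFieldType) (n r k m : nat) :
  (r <= k)%N -> (k < n)%N -> (m <= n)%N ->
  bonf_coef R n r k * ('C(m, k.+1))%:R <= (bonf_rem r k m)%:R.
Proof.
move=> rk kn mn; rewrite /bonf_coef /bonf_rem natr_sum mulr_suml.
apply: ler_sum_nat => i /andP[i_gt0 ir]; rewrite natrM -mulrA ler_wpM2l //.
have Cni_gt0 : (0 : R) < ('C(n, i))%:R by rewrite ltr0n bin_gt0; lia.
rewrite mulrAC ler_pdivrMr // -!natrM ler_nat mulnC bin_trinomial; last by lia.
by rewrite [leqLHS]mulnC leq_mul2l leq_bin2l ?orbT.
Qed.

Lemma bonf_lower_pointwise (R : numFieldType) (n r k m : nat) :
  (0 < r)%N -> (r <= k)%N -> (k < n)%N -> (m <= n)%N -> odd (r + k) ->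
  bonf_poly R r k m + bonf_coef R n r k * ('C(m, k.+1))%:R <= (r <= m)%:R.
Proof.
move=> r_gt0 rk kn mn rk_odd.
rewrite -[leRHS](subrK (bonf_poly R r k m)) bonf_poly_rem // -signr_odd /= rk_odd.
by rewrite expr0 mul1r [leRHS]addrC lerD2l bonf_coef_le.
Qed.

Lemma bonf_upper_pointwise (R : numFieldType) (n r k m : nat) :
  (0 < r)%N -> (r <= k)%N -> (k < n)%N -> (m <= n)%N -> ~~ odd (r + k) ->
  (r <= m)%:R <= bonf_poly R r k m - bonf_coef R n r k * ('C(m, k.+1))%:R.
Proof.
move=> r_gt0 rk kn mn rk_even.
rewrite -[leLHS](subrK (bonf_poly R r k m)) bonf_poly_rem // -signr_odd /=.
by rewrite (negbTE rk_even) expr1 mulN1r [leLHS]addrC lerD2l lerN2 bonf_coef_le.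
Qed.

Local Open Scope classical_set_scope.

Definition occurring (T : Type) (n : nat) (A : 'I_n -> set T) (x : T) : {set 'I_n} :=
  [set i | `[< A i x >]].

Lemma num_occE (T : Type) (n : nat) (A : 'I_n -> set T) (x : T) :
  num_occ A x = #|occurring A x|.
Proof. by apply: eq_card => i; rewrite inE; exact: asboolb. Qed.

Section Atoms.
Variables (d : measure_display) (T : measurableType d) (R : realType).
Variables (n : nat) (A : 'I_n -> set T).
Hypothesis mA : forall i, measurable (A i).

Lemma measurable_occurring_eq (J : {set 'I_n}) :
  measurable [set x | occurring A x = J].
Proof.
have -> : [set x | occurring A x = J] =
    \bigcap_(i in [set: 'I_n]) (if i \in J then A i else ~` A i).
  apply/seteqP; split => [x <- i _ | x AJ]; first by rewrite inE; case: asboolP.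
  apply/setP => i; rewrite inE; have := AJ i I.
  by case: (i \in J) => /= Aix; apply/asboolP.
apply: fin_bigcap_measurable => [|i _]; first exact: finite_finset.
by case: (i \in J); [exact: mA | exact/measurableC/mA].
Qed.

Lemma measure_occurring (mu : {measure set T -> \bar R}) (Pr : pred {set 'I_n}) :
  mu [set x | Pr (occurring A x)] =
  (\sum_(J | Pr J) mu [set x | occurring A x = J])%E.
Proof.
have -> : [set x | Pr (occurring A x)] =
    \bigcup_(J in [set` Pr]) [set x | occurring A x = J].
  apply/seteqP; split => x /=; last by move=> [J PJ ->].
  by move=> Px; exists (occurring A x).
rewrite measure_fin_bigcup //.
- by rewrite [RHS]bigfs ?index_enum_uniq // => J _; rewrite mem_index_enum.
- by move=> J J' _ _ [x [/= <- <-]].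
- by move=> J _; exact: measurable_occurring_eq.
Qed.

Variable P : probability T R.

Definition occ_prob (J : {set 'I_n}) : R := fine (P [set x | occurring A x = J]).

Definition occ_expect (f : nat -> R) : R := \sum_J occ_prob J * f #|J|.

Lemma fine_probability_occurring (Pr : pred {set 'I_n}) :
  fine (P [set x | Pr (occurring A x)]) = \sum_(J | Pr J) occ_prob J.
Proof.
rewrite measure_occurring sum_fine // => J _.
exact/fin_num_measure/measurable_occurring_eq.
Qed.

Lemma occ_expect_le (f g : nat -> R) :
  (forall m, (m <= n)%N -> f m <= g m) -> occ_expect f <= occ_expect g.
Proof.
move=> fg; apply: ler_sum => J _; rewrite ler_wpM2l ?fine_ge0 ?measure_ge0 //.
by apply: fg; rewrite -[leqRHS]card_ord max_card.
Qed.

Lemma occ_expectD (f g : nat -> R) :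
  occ_expect f + occ_expect g = occ_expect (fun m => f m + g m).
Proof. by rewrite -big_split; apply: eq_bigr => J _; rewrite mulrDr. Qed.

Lemma occ_expectB (f g : nat -> R) :
  occ_expect f - occ_expect g = occ_expect (fun m => f m - g m).
Proof. by rewrite -sumrB; apply: eq_bigr => J _; rewrite mulrBr. Qed.

Lemma num_occ_ge_occ_expect (r : nat) :
  fine (P [set x | (r <= num_occ A x)%N]) = occ_expect (fun m => (r <= m)%:R).
Proof.
under eq_set do rewrite num_occE.
rewrite (fine_probability_occurring (fun J => r <= #|J|)%N) big_mkcond.
by apply: eq_bigr => J _; case: ifP; rewrite ?mulr1 ?mulr0.
Qed.

Lemma Sj_occ_expect (j : nat) : Sj P A j = occ_expect (fun m => ('C(m, j))%:R).
Proof.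
have inter_evE (I : {set 'I_n}) : inter_ev A I = [set x | I \subset occurring A x].
  apply/seteqP; split => x /= IA.
    by apply/fintype.subsetP => i /IA Aix; rewrite inE; exact/asboolP.
  by move=> i /(fintype.subsetP IA); rewrite inE => /asboolP.
rewrite /Sj; under eq_bigr => I _ do
  rewrite inter_evE (fine_probability_occurring (fun J => I \subset J)).
rewrite (exchange_big_dep xpredT) //=; apply: eq_bigr => J _.
rewrite (eq_bigl (fun I => I \in [set K : {set 'I_n} | (K \subset J) && (#|K| == j)]%SET));
  last by move=> I; rewrite finset.in_set andbC.
by rewrite sumr_const cards_draws mulr_natr.
Qed.

Lemma bonf_main_occ_expect (r k : nat) :
  bonf_main P A r k = occ_expect (bonf_poly R r k).
Proof.
rewrite /bonf_main; under eq_bigr do rewrite Sj_occ_expect /occ_expect mulr_sumr.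
rewrite exchange_big /=; apply: eq_bigr => J _; rewrite /bonf_poly mulr_sumr.
by apply: eq_bigr => j _; rewrite mulrCA.
Qed.

Lemma bonf_corr_occ_expect (r k : nat) :
  bonf_corr P A r k = occ_expect (fun m => bonf_coef R n r k * ('C(m, k.+1))%:R).
Proof.
rewrite /bonf_corr -mulr_suml -/(bonf_coef R n r k) Sj_occ_expect mulr_sumr.
by apply: eq_bigr => J _; rewrite mulrCA.
Qed.

End Atoms.

Theorem theorem3 (d : measure_display) (T : measurableType d) (R : realType)
  (P : probability T R) (n : nat) (A : 'I_n -> set T)
  (mA : forall i, measurable (A i)) (r k : nat) :
  (1 <= r)%N -> (r <= k)%N -> (k < n)%N ->
  (odd (r + k) ->
     bonf_main P A r k + bonf_corr P A r k
       <= fine (P [set x | (r <= num_occ A x)%N])) /\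
  (~~ odd (r + k) ->
     fine (P [set x | (r <= num_occ A x)%N])
       <= bonf_main P A r k - bonf_corr P A r k).
Proof.
move=> r_gt0 rk kn.
rewrite (num_occ_ge_occ_expect mA) (bonf_main_occ_expect mA) (bonf_corr_occ_expect mA).
rewrite occ_expectD occ_expectB; split => rk_parity; apply: occ_expect_le => m mn.
- exact: (@bonf_lower_pointwise R n r k m).
- exact: (@bonf_upper_pointwise R n r k m).
Qed.
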